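(* There exists a full amicable orthogonal design $AOD\big(168;\ 4,164;\ 4,164\big)$.
   Context: An orthogonal design $OD(m;c_1,\ldots,c_k)$ is an $m\times m$ matrix $X$ with entries from $\{0,\pm x_1,\ldots,\pm x_k\}$, where $x_1,\ldots,x_k$ are commuting indeterminates, such that $XX^{\rm T}=(\sum_j c_jx_j^2)I_m$. An amicable orthogonal design $AOD(m;c_1,\ldots,c_k;d_1,\ldots,d_\ell)$ is a pair $(X;Y)$ where $X$ is an $OD(m;c_1,\ldots,c_k)$ in indeterminates $x_1,\ldots,x_k$, $Y$ is an $OD(m;d_1,\ldots,d_\ell)$ in indeterminates $y_1,\ldots,y_\ell$ disjoint from the $x_i$, and $XY^{\rm T}=YX^{\rm T}$. It is full if neither $X$ nor $Y$ has a zero entry. *)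

From HB Require Import structures.
From mathcomp Require Import all_boot all_order all_algebra.
Set Implicit Arguments. Unset Strict Implicit. Unset Printing Implicit Defensive.
Import GRing.Theory.
Local Open Scope ring_scope.

(* A formal entry of a design in k indeterminates x_0,...,x_{k-1}:
   None = 0,  Some (false, j) = + x_j,  Some (true, j) = - x_j. *)
Definition sym (k : nat) := option (bool * 'I_k).

Definition design (m k : nat) := 'M[sym k]_m.

Definition eval_sym (R : pzRingType) (k : nat) (x : 'I_k -> R) (s : sym k) : R :=
  match s with
  | None => 0
  | Some (b, j) => (-1) ^+ b * x j
  end.

Definition evalD (R : pzRingType) (m k : nat) (X : design m k) (x : 'I_k -> R)
  : 'M[R]_m := \matrix_(i, j) eval_sym x (X i j).

(* X X^T = (sum_j c_j x_j^2) I_m as an identity in commuting indeterminates: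
   we require it for every value of the indeterminates in every commutative
   ring (this includes the polynomial ring itself, so it is equivalent). *)
Definition is_OD (m k : nat) (c : 'I_k -> nat) (X : design m k) : Prop :=
  forall (R : comNzRingType) (x : 'I_k -> R),
    evalD X x *m (evalD X x)^T = (\sum_(j < k) (c j)%:R * x j ^+ 2)%:M.

Definition is_AOD (m k l : nat) (c : 'I_k -> nat) (d : 'I_l -> nat)
  (X : design m k) (Y : design m l) : Prop :=
  [/\ is_OD c X, is_OD d Y &
      forall (R : comNzRingType) (x : 'I_k -> R) (y : 'I_l -> R),
        evalD X x *m (evalD Y y)^T = evalD Y y *m (evalD X x)^T].

Definition full_design (m k : nat) (X : design m k) : Prop :=
  forall i j, X i j <> None.

Definition coefs (s : seq nat) : 'I_(size s) -> nat := fun j => nth 0%N s j.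
Arguments coefs s : clear implicits.

(* W is the symmetric conference matrix of order 42 obtained by bordering the
   Paley core of GF(41) (symmetric since 41 = 1 mod 4): W^T = W, W has zero
   diagonal and W W^T = 41 I.  If A, B are 4 x 4 (+-1)-matrices with
   A A^T = B B^T = 4 I and A B^T = - B A^T, then X = x_1 (I (x) A) + x_2 (W (x) B)
   satisfies X X^T = (4 x_1^2 + 164 x_2^2) I, and X has no zero entry because
   I and W have complementary supports.  For a second such pair C, D with each
   of A, B amicable with each of C, D, the design Y = y_1 (I (x) C) + y_2 (W (x) D)
   is amicable with X. *)
From mathcomp Require Import all_boot all_order all_algebra.
From mathcomp Require Import mxtens.
Set Implicit Arguments. Unset Strict Implicit. Unset Printing Implicit Defensive.
Import GRing.Theory.
Local Open Scope ring_scope.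

Section Kronecker.
Variable R : comPzRingType.

Lemma scalar_tensmx m n (a b : R) : (a%:M : 'M_m) *t (b%:M : 'M_n) = (a * b)%:M.
Proof.
apply/matrixP=> i j.
case: (mxtens_indexP i) => i0 i1; case: (mxtens_indexP j) => j0 j1.
rewrite tensmxE !mxE (inj_eq (can_inj (@mxtens_indexK _ _))) xpair_eqE.
by case: (i0 == j0); case: (i1 == j1); rewrite /= ?mulr1n ?mulr0n ?mulr0 ?mul0r.
Qed.

Lemma tensmxN m n p q (M : 'M[R]_(m, n)) (N : 'M[R]_(p, q)) :
  M *t (- N) = - (M *t N).
Proof. by apply/matrixP=> i j; rewrite !mxE mulrN. Qed.

Lemma lincomb_mulmx_tr n (P Q : 'M[R]_n) (a b x0 x1 : R) :
  P *m P^T = a%:M -> Q *m Q^T = b%:M -> P *m Q^T + Q *m P^T = 0 ->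
  (x0 *: P + x1 *: Q) *m (x0 *: P + x1 *: Q)^T = (a * x0 ^+ 2 + b * x1 ^+ 2)%:M.
Proof.
move=> hP hQ hPQ.
rewrite linearD !linearZ /= mulmxDl !mulmxDr -!scalemxAl -!scalemxAr !scalerA.
rewrite hP hQ [x1 * x0]mulrC -addrA [X in _ + X]addrA -scalerDr hPQ scaler0 add0r.
by rewrite !scale_scalar_mx raddfD /= -!expr2 ![_ * a]mulrC ![_ * b]mulrC.
Qed.

Lemma lincomb_amicable n (P Q U V : 'M[R]_n) (x0 x1 y0 y1 : R) :
  P *m U^T = U *m P^T -> P *m V^T = V *m P^T ->
  Q *m U^T = U *m Q^T -> Q *m V^T = V *m Q^T ->
  (x0 *: P + x1 *: Q) *m (y0 *: U + y1 *: V)^T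
  = (y0 *: U + y1 *: V) *m (x0 *: P + x1 *: Q)^T.
Proof.
move=> h1 h2 h3 h4.
rewrite !linearD !linearZ /= !mulmxDl -!scalemxAl !scalerDr !scalerA.
rewrite h1 h2 h3 h4 [y0 * x0]mulrC [y0 * x1]mulrC [y1 * x0]mulrC [y1 * x1]mulrC.
by rewrite addrACA.
Qed.

Variables (m n : nat) (W : 'M[R]_m) (w : R).
Hypotheses (W_sym : W^T = W) (W_orth : W *m W^T = w%:M).

Lemma tens_lincomb_mulmx_tr (A B : 'M[R]_n) (c x0 x1 : R) :
  A *m A^T = c%:M -> B *m B^T = c%:M -> A *m B^T = - (B *m A^T) ->
  (x0 *: (1%:M *t A) + x1 *: (W *t B)) *m (x0 *: (1%:M *t A) + x1 *: (W *t B))^T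
  = (c * x0 ^+ 2 + w * c * x1 ^+ 2)%:M.
Proof.
move=> hA hB hAB; apply: lincomb_mulmx_tr;
  rewrite !trmx_tens !tensmx_mul ?trmx1 ?mulmx1 ?mul1mx ?W_orth ?W_sym.
- by rewrite hA scalar_tensmx mul1r.
- by rewrite hB scalar_tensmx.
- by rewrite hAB tensmxN addNr.
Qed.

Lemma tens_lincomb_amicable (A B C D : 'M[R]_n) (x0 x1 y0 y1 : R) :
  A *m C^T = C *m A^T -> A *m D^T = D *m A^T ->
  B *m C^T = C *m B^T -> B *m D^T = D *m B^T ->
  (x0 *: (1%:M *t A) + x1 *: (W *t B)) *m (y0 *: (1%:M *t C) + y1 *: (W *t D))^T
  = (y0 *: (1%:M *t C) + y1 *: (W *t D)) *m (x0 *: (1%:M *t A) + x1 *: (W *t B))^T.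
Proof.
move=> hAC hAD hBC hBD; apply: lincomb_amicable;
  by rewrite !trmx_tens !tensmx_mul ?trmx1 ?mulmx1 ?mul1mx ?W_sym ?hAC ?hAD ?hBC ?hBD.
Qed.

End Kronecker.

Definition sign (b : bool) : int := (-1) ^+ b.

Definition gram (n : nat) (f g : nat -> nat -> int) (i j : nat) : int :=
  foldr (fun k acc => f i k * g j k + acc) 0 (iota 0 n).

Definition scalar_fun (c : int) (i j : nat) : int := if i == j then c else 0.

Definition eq_on_square (n : nat) (f g : nat -> nat -> int) : bool :=
  all (fun i => all (fun j => f i j == g i j) (iota 0 n)) (iota 0 n).

Definition int_mx n (f : nat -> nat -> int) : 'M[int]_n := \matrix_(i, j) f i j.

Lemma int_mx_eq n f g : eq_on_square n f g -> int_mx n f = int_mx n g.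
Proof.
move=> /allP fg; apply/matrixP=> i j; rewrite !mxE.
have /allP fg_i := fg i (etrans (mem_iota 0 n i) (ltn_ord i)).
by rewrite (eqP (fg_i j (etrans (mem_iota 0 n j) (ltn_ord j)))).
Qed.

Lemma int_mx_tr n f : (int_mx n f)^T = int_mx n (fun i j => f j i).
Proof. by apply/matrixP=> i j; rewrite !mxE. Qed.

Lemma int_mx_opp n f : int_mx n (fun i j => - f i j) = - int_mx n f.
Proof. by apply/matrixP=> i j; rewrite !mxE. Qed.

Lemma int_mx_scalar n c : int_mx n (scalar_fun c) = c%:M.
Proof.
apply/matrixP=> i j; rewrite !mxE /scalar_fun inj_eq; last exact: val_inj.
by case: (i == j); rewrite ?mulr1n ?mulr0n.
Qed.

Lemma int_mx_gram n f g : int_mx n f *m (int_mx n g)^T = int_mx n (gram n f g).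
Proof.
apply/matrixP=> i j; rewrite !mxE /gram.
have -> : forall r, foldr (fun k acc => f i k * g j k + acc) 0 r
                    = \sum_(k <- r) f i k * g j k.
  by elim=> [|k r IH]; rewrite ?big_nil ?big_cons //= IH.
have -> : iota 0 n = index_iota 0 n by rewrite /index_iota subn0.
by rewrite big_mkord; apply: eq_bigr => k _; rewrite !mxE.
Qed.

Definition neg_at (s : seq (seq bool)) (i j : nat) : bool := nth false (nth [::] s i) j.

Definition sign_mx n (s : seq (seq bool)) : 'M[int]_n :=
  int_mx n (fun i j => sign (neg_at s i j)).

(* The [let]s make the table of squares a value that [vm_compute] evaluates
   once per matrix rather than once per entry. *)
Definition paley_neg (p : nat) : nat -> nat -> bool :=
  let squares := [seq k * k %% p | k <- iota 1 p.-1]%N in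
  fun i j => [&& i != 0, j != 0 & (i + p - j) %% p \notin squares]%N.

Definition paley (p : nat) : nat -> nat -> int :=
  let neg := paley_neg p in fun i j => if i == j then 0 else sign (neg i j).

Definition paley_mx (p : nat) : 'M[int]_p.+1 := int_mx p.+1 (paley p).

Lemma paley_mx41_sym : (paley_mx 41)^T = paley_mx 41.
Proof. by rewrite int_mx_tr; apply: int_mx_eq; vm_compute. Qed.

Lemma paley_mx41_orth : paley_mx 41 *m (paley_mx 41)^T = 41%:M.
Proof. by rewrite int_mx_gram -int_mx_scalar; apply: int_mx_eq; vm_compute. Qed.

Definition A4 : seq (seq bool) :=
  [:: [:: false; false; false; false]; [:: false; false; true; true];
      [:: false; true; false; true]; [:: false; true; true; false]].

Definition B4 : seq (seq bool) :=
  [:: [:: false; false; true; true]; [:: true; true; true; true];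
      [:: false; true; true; false]; [:: true; false; true; false]].

Definition C4 : seq (seq bool) :=
  [:: [:: false; false; false; false]; [:: true; true; false; false];
      [:: false; true; false; true]; [:: true; false; false; true]].

Definition D4 : seq (seq bool) :=
  [:: [:: false; false; true; true]; [:: false; false; false; false];
      [:: false; true; true; false]; [:: false; true; false; true]].

Lemma sign_mx4_orth s : s \in [:: A4; B4; C4; D4] ->
  sign_mx 4 s *m (sign_mx 4 s)^T = 4%:M.
Proof.
rewrite int_mx_gram -int_mx_scalar => s_in; apply: int_mx_eq.
by move: s_in; rewrite !inE => /or4P[] /eqP->; vm_compute.
Qed.

Lemma sign_mx4_anti_amicable s t : (s, t) \in [:: (A4, B4); (C4, D4)] ->
  sign_mx 4 s *m (sign_mx 4 t)^T = - (sign_mx 4 t *m (sign_mx 4 s)^T).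
Proof.
rewrite !int_mx_gram -int_mx_opp => st_in; apply: int_mx_eq.
by move: st_in; rewrite !inE => /orP[] /eqP[-> ->]; vm_compute.
Qed.

Lemma sign_mx4_amicable s t : s \in [:: A4; B4] -> t \in [:: C4; D4] ->
  sign_mx 4 s *m (sign_mx 4 t)^T = sign_mx 4 t *m (sign_mx 4 s)^T.
Proof.
rewrite !int_mx_gram !inE => s_in t_in; apply: int_mx_eq.
by case/orP: s_in => /eqP->; case/orP: t_in => /eqP->; vm_compute.
Qed.

Lemma map_int_mulmx_tr (R : pzRingType) m n (M N : 'M[int]_(m, n)) :
  map_mx intr (M *m N^T) = map_mx intr M *m (map_mx (intr : int -> R) N)^T.
Proof. by rewrite map_mxM map_trmx. Qed.

Lemma map_paley_mx41_sym (R : pzRingType) :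
  (map_mx (intr : int -> R) (paley_mx 41))^T = map_mx intr (paley_mx 41).
Proof. by rewrite map_trmx paley_mx41_sym. Qed.

Lemma map_paley_mx41_orth (R : pzRingType) :
  map_mx (intr : int -> R) (paley_mx 41) *m (map_mx intr (paley_mx 41))^T = 41%:~R%:M.
Proof. by rewrite -map_int_mulmx_tr paley_mx41_orth map_scalar_mx. Qed.

Definition paley_design_entry (s t : seq (seq bool)) (i j : 'I_(42 * 4)) : sym 2 :=
  let: (a, p) := mxtens_unindex i in
  let: (b, q) := mxtens_unindex j in
  if a == b then Some (neg_at s p q, ord0)
  else Some (paley_neg 41 a b (+) neg_at t p q, ord_max).

Definition paley_design (s t : seq (seq bool)) : design 168 2 :=
  \matrix_(i, j) paley_design_entry s t i j.

Lemma paley_design_full s t : full_design (paley_design s t).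
Proof.
move=> i j; rewrite mxE /paley_design_entry.
by case: (@mxtens_unindex 42 4 i) => a p; case: (@mxtens_unindex 42 4 j) => b q; case: ifP.
Qed.

Lemma evalD_paley_design (R : comPzRingType) s t (x : 'I_2 -> R) :
  evalD (paley_design s t) x
  = x ord0 *: (1%:M *t map_mx intr (sign_mx 4 s))
    + x ord_max *: (map_mx intr (paley_mx 41) *t map_mx intr (sign_mx 4 t)).
Proof.
apply/matrixP=> i j.
case: (@mxtens_indexP 42 4 i) => a p; case: (@mxtens_indexP 42 4 j) => b q.
rewrite !mxE /paley_design_entry !mxtens_indexK /= /paley /sign !intr_sign.
case: (a =P b) => [<-|/eqP a_neq_b].
  by rewrite !eqxx /= mul1r mul0r mulr0 addr0 mulrC.
rewrite ifF; last by apply: contraNF a_neq_b => /eqP/val_inj->.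
by rewrite /= mul0r mulr0 add0r intr_sign signr_addb mulrC.
Qed.

Lemma paley_design_OD s t (c : nat) :
  sign_mx 4 s *m (sign_mx 4 s)^T = c%:Z%:M ->
  sign_mx 4 t *m (sign_mx 4 t)^T = c%:Z%:M ->
  sign_mx 4 s *m (sign_mx 4 t)^T = - (sign_mx 4 t *m (sign_mx 4 s)^T) ->
  is_OD (coefs [:: c; 41 * c]%N) (paley_design s t).
Proof.
move=> hs ht hst R x; have intrmx := congr1 (map_mx (intr : int -> R)).
move: (intrmx _ _ _ _ hs) (intrmx _ _ _ _ ht) (intrmx _ _ _ _ hst).
rewrite map_mxN !map_int_mulmx_tr !map_scalar_mx => hsR htR hstR.
rewrite evalD_paley_design.
rewrite (tens_lincomb_mulmx_tr (map_paley_mx41_sym R) (map_paley_mx41_orth R) _ _ hsR htR hstR).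
rewrite big_ord_recl big_ord1 natrM.
by congr ((_ + _ * x _ ^+ 2)%:M); apply: val_inj.
Qed.

Lemma paley_design_amicable s t u v (R : comNzRingType) (x y : 'I_2 -> R) :
  sign_mx 4 s *m (sign_mx 4 u)^T = sign_mx 4 u *m (sign_mx 4 s)^T ->
  sign_mx 4 s *m (sign_mx 4 v)^T = sign_mx 4 v *m (sign_mx 4 s)^T ->
  sign_mx 4 t *m (sign_mx 4 u)^T = sign_mx 4 u *m (sign_mx 4 t)^T ->
  sign_mx 4 t *m (sign_mx 4 v)^T = sign_mx 4 v *m (sign_mx 4 t)^T ->
  evalD (paley_design s t) x *m (evalD (paley_design u v) y)^T
  = evalD (paley_design u v) y *m (evalD (paley_design s t) x)^T.
Proof.
have intrmx := congr1 (map_mx (intr : int -> R)).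
move=> /intrmx hsu /intrmx hsv /intrmx htu /intrmx htv.
rewrite !map_int_mulmx_tr in hsu hsv htu htv.
rewrite !evalD_paley_design.
by rewrite (tens_lincomb_amicable (map_paley_mx41_sym R) _ _ _ _ hsu hsv htu htv).
Qed.

Theorem mainTheorem5 :
  exists (X : design 168 2) (Y : design 168 2),
    is_AOD (coefs [:: 4; 164]%N) (coefs [:: 4; 164]%N) X Y /\
    full_design X /\ full_design Y.
Proof.
exists (paley_design A4 B4), (paley_design C4 D4).
split; last by split; apply: paley_design_full.
split.
- by apply: (@paley_design_OD _ _ 4); [apply: sign_mx4_orth.. | apply: sign_mx4_anti_amicable].
- by apply: (@paley_design_OD _ _ 4); [apply: sign_mx4_orth.. | apply: sign_mx4_anti_amicable].
- by move=> R x y; apply: paley_design_amicable; apply: sign_mx4_amicable.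
Qed.
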